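(* Let $0<\alpha<1/2$ and $\alpha':=\alpha+\frac12$. Define $C_1=\Gamma(\alpha-\frac12)/\sqrt\pi$ and for $k\ge2$ \[ C_k=\frac14\sum_{j=1}^{k-1}\binom kjC_jC_{k-j}+kC_{k-1}\frac{\Gamma(k\alpha+\frac k2-1)}{\Gamma((k-1)\alpha+\frac k2-1)}. \] Then there exists a constant $A<\infty$ depending only on $\alpha$ such that $|C_k/k!|\le A^kk^{\alpha'k}$ for all $k\ge1$.
   Context: $\Gamma$ is Euler's gamma function. *)

From Stdlib Require Import Reals.
From Coquelicot Require Import Coquelicot.
Open Scope R_scope.

Definition GammaPos (x : R) : R :=
  RInt_gen (fun t => exp (- t) * Rpower t (x - 1))
           (at_right 0) (Rbar_locally p_infty).

(* Analytic continuation to non-positive non-integers via Gamma(x) = Gamma(x+1)/x,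
   iterated until the argument becomes positive.  (Values at the poles
   0,-1,-2,... are junk and never used.) *)
Fixpoint Gamma_iter (n : nat) (x : R) : R :=
  match n with
  | O => GammaPos x
  | S m => if Rlt_dec 0 x then GammaPos x else Gamma_iter m (x + 1) / x
  end.

Definition Gamma (x : R) : R := Gamma_iter (S (Z.to_nat (up (- x)))) x.

(* With c_k = C_k / k!, the recurrence reads
     c_k = 1/4 sum_{j=1}^{k-1} c_j c_{k-j} + c_{k-1} Gamma(x + alpha) / Gamma(x),
   where x = (k-1) alpha + k/2 - 1 lies in (0, k].  Concavity of t |-> t^alpha gives
   t^alpha <= x^alpha + x^(alpha-1) t; integrating this against e^(-t) t^(x-1) and using
   Gamma(x+1) <= x Gamma(x) yields Gamma(x + alpha) <= 2 x^alpha Gamma(x) <= 2 k^alpha'.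
   Strong induction then gives |c_k| <= A^k k^(alpha' k) / (4 k^2) with A = 16 + 4 |c_1|:
   the factor 1/k^2 makes the convolution summable, sum_j 1/(j^2 (k-j)^2) <= 8/k^2, and
   A >= 16 absorbs the linear term.  On (0, oo), Gamma is handled as the supremum of the
   integrals of its integrand over compact subintervals. *)

From Stdlib Require Import Reals Lra Lia Psatz Classical.
From Coquelicot Require Import Coquelicot.
Open Scope R_scope.

Section NonnegIntegrand.

Variable f : R -> R.
Hypothesis f_ge0 : forall t, 0 < t -> 0 <= f t.
Hypothesis ex_RInt_f : forall a b, 0 < a -> a <= b -> ex_RInt f a b.

Definition partial_integrals (v : R) : Prop :=
  exists a b, 0 < a /\ a <= b /\ v = RInt f a b.

Lemma RInt_le_subinterval a b a' b' :
  0 < a' -> a' <= a -> a <= b -> b <= b' -> RInt f a b <= RInt f a' b'.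
Proof.
  intros Ha' Ha'a Hab Hbb'.
  assert (Hge0 : forall u v, 0 < u -> u <= v -> 0 <= RInt f u v).
  { intros u v Hu Huv.
    apply RInt_ge_0; [lra | now apply ex_RInt_f | intros t Ht; apply f_ge0; lra]. }
  rewrite <- (RInt_Chasles f a' a b') by (apply ex_RInt_f; lra).
  rewrite <- (RInt_Chasles f a b b') by (apply ex_RInt_f; lra).
  pose proof (Hge0 a' a Ha' Ha'a). pose proof (Hge0 b b' ltac:(lra) Hbb').
  unfold plus; simpl. lra.
Qed.

Lemma is_RInt_gen_lub l :
  is_lub partial_integrals l -> is_RInt_gen f (at_right 0) (Rbar_locally p_infty) l.
Proof.
  intros [Hub Hleast] P [eps Heps].
  assert (Happrox : exists a0 b0, 0 < a0 /\ a0 <= b0 /\ l - eps < RInt f a0 b0).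
  { apply NNPP. intros Hnone.
    assert (l <= l - eps).
    { apply Hleast. intros v (a & b & Ha & Hab & ->).
      apply Rnot_lt_le. intros Hlt. apply Hnone. now exists a, b. }
    pose proof (cond_pos eps). lra. }
  destruct Happrox as (a0 & b0 & Ha0 & Hab0 & Hclose).
  apply (Filter_prod _ _ _ (fun a => 0 < a < a0) (fun b => b0 < b)).
  - exists (mkposreal a0 Ha0). intros a Hball Ha.
    unfold ball in Hball; simpl in Hball.
    unfold AbsRing_ball, abs, minus, plus, opp in Hball; simpl in Hball.
    apply Rabs_def2 in Hball. lra.
  - now exists b0.
  - intros a b Ha Hb. exists (RInt f a b). split.
    + apply (RInt_correct (V:=R_CompleteNormedModule)), ex_RInt_f; lra.
    + apply Heps. unfold ball; simpl. unfold AbsRing_ball, abs, minus, plus, opp; simpl.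
      assert (RInt f a b <= l) by (apply Hub; exists a, b; repeat split; lra).
      assert (RInt f a0 b0 <= RInt f a b) by (apply RInt_le_subinterval; lra).
      apply Rabs_def1; lra.
Qed.

Lemma is_lub_RInt_gen M :
  (forall a b, 0 < a -> a <= b -> RInt f a b <= M) ->
  is_lub partial_integrals (RInt_gen f (at_right 0) (Rbar_locally p_infty)).
Proof.
  intros HM.
  destruct (completeness partial_integrals) as [l Hl].
  - exists M. intros v (a & b & Ha & Hab & ->). now apply HM.
  - exists (RInt f 1 1), 1, 1. repeat split; lra.
  - now rewrite (is_RInt_gen_unique f l) by now apply is_RInt_gen_lub.
Qed.

End NonnegIntegrand.

Lemma Rpower_pos x y : 0 < Rpower x y.
Proof. apply exp_pos. Qed.

Lemma Rpower_1_l y : Rpower 1 y = 1.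
Proof. unfold Rpower. now rewrite ln_1, Rmult_0_r, exp_0. Qed.

Lemma Rpower_minus_1 t x : 0 < t -> Rpower t (x - 1) = Rpower t x / t.
Proof.
  intros Ht. unfold Rminus. rewrite Rpower_plus, Rpower_Ropp, Rpower_1 by lra.
  reflexivity.
Qed.

Lemma pow_le_exp N t : (0 < N)%nat -> 0 <= t -> t ^ N <= INR N ^ N * exp t.
Proof.
  intros HN Ht. assert (HN' : 0 < INR N) by now apply lt_0_INR.
  replace t with (INR N * (t / INR N)) at 1 by (field; lra).
  rewrite Rpow_mult_distr. apply Rmult_le_compat_l; [apply pow_le; lra|].
  replace (exp t) with (exp (t / INR N) ^ N).
  - apply pow_incr. split; [apply Rdiv_le_0_compat; lra|].
    pose proof (exp_ineq1_le (t / INR N)). lra.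
  - rewrite <- Rpower_pow by apply exp_pos. unfold Rpower. rewrite ln_exp.
    f_equal. field. lra.
Qed.

Lemma RInt_le_primitive (f g G : R -> R) a b :
  a <= b -> ex_RInt f a b ->
  (forall t, a <= t <= b -> is_derive G t (g t)) ->
  (forall t, a <= t <= b -> continuous g t) ->
  (forall t, a < t < b -> f t <= g t) ->
  RInt f a b <= G b - G a.
Proof.
  intros Hab Hf HG Hg Hfg.
  assert (Hint : is_RInt g a b (G b - G a)).
  { apply (is_RInt_derive (V:=R_CompleteNormedModule));
      intros t; rewrite Rmin_left, Rmax_right by lra; auto. }
  rewrite <- (is_RInt_unique g a b _ Hint).
  apply RInt_le; auto. now exists (G b - G a).
Qed.

Definition gamma_integrand (y t : R) : R := exp (- t) * Rpower t (y - 1).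

Lemma gamma_integrand_pos y t : 0 < gamma_integrand y t.
Proof. apply Rmult_lt_0_compat; apply exp_pos. Qed.

Lemma ex_RInt_gamma_integrand y a b : 0 < a -> a <= b -> ex_RInt (gamma_integrand y) a b.
Proof.
  intros Ha Hab. apply (ex_RInt_continuous (V:=R_CompleteNormedModule)).
  intros t Ht. rewrite Rmin_left in Ht by lra.
  apply (ex_derive_continuous (K:=R_AbsRing) (V:=R_NormedModule)).
  unfold gamma_integrand, Rpower. auto_derive. lra.
Qed.

Lemma RInt_gamma_integrand_below_1 y a : 0 < y -> 0 < a -> a <= 1 ->
  RInt (gamma_integrand y) a 1 <= / y.
Proof.
  intros Hy Ha Ha1.
  eapply Rle_trans.
  { apply (RInt_le_primitive _ (fun t => Rpower t (y - 1)) (fun t => / y * Rpower t y));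
      [lra | now apply ex_RInt_gamma_integrand | | |].
    - intros t Ht.
      replace (Rpower t (y - 1)) with (/ y * (y * Rpower t (y - 1))) by (field; lra).
      apply is_derive_scal, is_derive_Reals, derivable_pt_lim_power. lra.
    - intros t Ht. apply (ex_derive_continuous (K:=R_AbsRing) (V:=R_NormedModule)).
      unfold Rpower. auto_derive. lra.
    - intros t Ht. unfold gamma_integrand.
      assert (exp (- t) <= 1) by (rewrite <- exp_0; left; apply exp_increasing; lra).
      pose proof (Rpower_pos t (y - 1)). nra. }
  rewrite Rpower_1_l.
  assert (0 < / y * Rpower a y)
    by (apply Rmult_lt_0_compat; [apply Rinv_0_lt_compat | apply Rpower_pos]; lra).
  lra.
Qed.

Lemma gamma_integrand_le_inv_sq y N t : 0 < y -> y + 1 <= INR N -> 1 <= t ->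
  gamma_integrand y t <= INR N ^ N / t ^ 2.
Proof.
  intros Hy HN Ht.
  assert (HN0 : (0 < N)%nat) by (apply INR_lt; simpl; lra).
  assert (Hpow : Rpower t (y + 1) <= INR N ^ N * exp t).
  { apply Rle_trans with (Rpower t (INR N)); [apply Rle_Rpower; lra|].
    rewrite Rpower_pow by lra. apply pow_le_exp; [exact HN0 | lra]. }
  assert (Hexp : exp (- t) * exp t = 1) by (rewrite <- exp_plus, Rplus_opp_l; apply exp_0).
  unfold gamma_integrand.
  replace (y - 1) with ((y + 1) - 1 - 1) by ring.
  rewrite !Rpower_minus_1 by lra.
  pose proof (exp_pos (- t)).
  apply Rmult_le_reg_r with (t ^ 2); [nra|].
  field_simplify; [|lra|lra].
  apply Rle_trans with (exp (- t) * (INR N ^ N * exp t)); [apply Rmult_le_compat_l; lra|].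
  rewrite Rmult_comm, Rmult_assoc, (Rmult_comm (exp t)), Hexp. lra.
Qed.

Lemma RInt_gamma_integrand_above_1 y N b : 0 < y -> y + 1 <= INR N -> 1 <= b ->
  RInt (gamma_integrand y) 1 b <= INR N ^ N.
Proof.
  intros Hy HN Hb.
  assert (HK : 0 <= INR N ^ N) by (apply pow_le; lra).
  eapply Rle_trans.
  { apply (RInt_le_primitive _ (fun t => INR N ^ N / t ^ 2) (fun t => - INR N ^ N / t));
      [lra | apply ex_RInt_gamma_integrand; lra | | |].
    - intros t Ht. auto_derive; [lra|]. field. lra.
    - intros t Ht. apply (ex_derive_continuous (K:=R_AbsRing) (V:=R_NormedModule)).
      auto_derive. nra.
    - intros t Ht. apply gamma_integrand_le_inv_sq; lra. }
  assert (0 <= INR N ^ N / b) by (apply Rdiv_le_0_compat; lra).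
  replace (- INR N ^ N / b - - INR N ^ N / 1) with (INR N ^ N - INR N ^ N / b) by (field; lra).
  lra.
Qed.

Lemma RInt_gamma_integrand_bounded y : 0 < y ->
  exists M, forall a b, 0 < a -> a <= b -> RInt (gamma_integrand y) a b <= M.
Proof.
  intros Hy. destruct (INR_unbounded (y + 1)) as [N HN].
  exists (/ y + INR N ^ N). intros a b Ha Hab.
  assert (Ha1 : 0 < Rmin a 1) by (apply Rmin_pos; lra).
  apply Rle_trans with (RInt (gamma_integrand y) (Rmin a 1) (Rmax b 1)).
  { apply RInt_le_subinterval; [intros t _; left; apply gamma_integrand_pos
    | intros u v Hu Huv; now apply ex_RInt_gamma_integrand
    | exact Ha1 | apply Rmin_l | exact Hab | apply Rmax_l]. }
  pose proof (Rmin_r a 1). pose proof (Rmax_r b 1).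
  rewrite <- (RInt_Chasles _ (Rmin a 1) 1 (Rmax b 1)) by (apply ex_RInt_gamma_integrand; lra).
  pose proof (RInt_gamma_integrand_below_1 y (Rmin a 1) Hy Ha1 ltac:(lra)).
  pose proof (RInt_gamma_integrand_above_1 y N (Rmax b 1) Hy ltac:(lra) ltac:(lra)).
  unfold plus; simpl. lra.
Qed.

Lemma GammaPos_lub y : 0 < y -> is_lub (partial_integrals (gamma_integrand y)) (GammaPos y).
Proof.
  intros Hy. destruct (RInt_gamma_integrand_bounded y Hy) as [M HM].
  apply (is_lub_RInt_gen _ (fun t _ => Rlt_le _ _ (gamma_integrand_pos y t))
           (ex_RInt_gamma_integrand y) M HM).
Qed.

Lemma RInt_gamma_integrand_le_GammaPos y a b : 0 < y -> 0 < a -> a <= b ->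
  RInt (gamma_integrand y) a b <= GammaPos y.
Proof. intros Hy Ha Hab. apply (GammaPos_lub y Hy). now exists a, b. Qed.

Lemma GammaPos_le y M : 0 < y ->
  (forall a b, 0 < a -> a <= b -> RInt (gamma_integrand y) a b <= M) -> GammaPos y <= M.
Proof.
  intros Hy HM. apply (GammaPos_lub y Hy). intros v (a & b & Ha & Hab & ->). now apply HM.
Qed.

Lemma GammaPos_ge0 y : 0 < y -> 0 <= GammaPos y.
Proof.
  intros Hy. pose proof (RInt_gamma_integrand_le_GammaPos y 1 1 Hy Rlt_0_1 (Rle_refl 1)) as H.
  now rewrite RInt_point in H.
Qed.

Lemma RInt_gamma_integrand_succ x a b : 0 < x -> 0 < a -> a <= b ->
  RInt (gamma_integrand (x + 1)) a b =
  x * RInt (gamma_integrand x) a b + (exp (- a) * Rpower a x - exp (- b) * Rpower b x).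
Proof.
  intros Hx Ha Hab.
  set (G := fun t => - exp (- t) * Rpower t x).
  assert (HG : is_RInt (fun t => gamma_integrand (x + 1) t - x * gamma_integrand x t) a b
                 (G b - G a)).
  { apply (is_RInt_derive (V:=R_CompleteNormedModule) G);
      intros t Ht; rewrite Rmin_left, Rmax_right in Ht by lra.
    - unfold G, gamma_integrand. replace (x + 1 - 1) with x by ring.
      rewrite Rpower_minus_1 by lra. unfold Rpower.
      auto_derive; [lra|]. field. lra.
    - apply (ex_derive_continuous (K:=R_AbsRing) (V:=R_NormedModule)).
      unfold gamma_integrand, Rpower. auto_derive. lra. }
  assert (Hsplit : RInt (fun t => gamma_integrand (x + 1) t - x * gamma_integrand x t) a b
                   = RInt (gamma_integrand (x + 1)) a b - x * RInt (gamma_integrand x) a b).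
  { apply is_RInt_unique.
    apply (is_RInt_minus (V:=R_NormedModule)); [|apply (is_RInt_scal (V:=R_NormedModule))];
      apply (RInt_correct (V:=R_CompleteNormedModule)), ex_RInt_gamma_integrand; lra. }
  rewrite (is_RInt_unique _ _ _ _ HG) in Hsplit. unfold G in Hsplit. lra.
Qed.

Lemma GammaPos_succ_le x : 0 < x -> GammaPos (x + 1) <= x * GammaPos x.
Proof.
  intros Hx. apply GammaPos_le; [lra|]. intros a b Ha Hab.
  apply Rle_plus_epsilon. intros eps Heps.
  (* Lower [a] until the boundary term [a' ^ x] of the integration by parts is below [eps]. *)
  set (a' := Rmin a (Rpower eps (/ x))).
  assert (Ha' : 0 < a') by (apply Rmin_pos; [lra | apply Rpower_pos]).
  assert (Ha'a : a' <= a) by apply Rmin_l.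
  assert (Hboundary : Rpower a' x <= eps).
  { apply Rle_trans with (Rpower (Rpower eps (/ x)) x).
    - apply Rle_Rpower_l; [lra | split; [lra | apply Rmin_r]].
    - rewrite Rpower_mult, Rinv_l, Rpower_1; lra. }
  apply Rle_trans with (RInt (gamma_integrand (x + 1)) a' b).
  { apply RInt_le_subinterval; try lra.
    - intros t _. left. apply gamma_integrand_pos.
    - intros u v Hu Huv. now apply ex_RInt_gamma_integrand. }
  rewrite RInt_gamma_integrand_succ by lra.
  pose proof (RInt_gamma_integrand_le_GammaPos x a' b Hx Ha' ltac:(lra)).
  assert (exp (- a') <= 1) by (rewrite <- exp_0; left; apply exp_increasing; lra).
  pose proof (Rpower_pos a' x). pose proof (Rpower_pos b x). pose proof (exp_pos (- b)).
  nra.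
Qed.

Lemma Rpower_le_affine x t al : 0 < x -> 0 < t -> 0 <= al <= 1 ->
  Rpower t al <= Rpower x al + Rpower x (al - 1) * t.
Proof.
  intros Hx Ht Hal.
  pose proof (Rpower_pos x al). pose proof (Rpower_pos x (al - 1)).
  destruct (Rle_or_lt t x) as [Htx | Hxt].
  - pose proof (Rle_Rpower_l t x al ltac:(lra) ltac:(lra)). nra.
  - rewrite (Rpower_minus_1 x al Hx) in *.
    assert (Hdecr : Rpower t al / t <= Rpower x al / x).
    { rewrite <- !Rpower_minus_1 by lra.
      replace (al - 1) with (- (1 - al)) by ring. rewrite !Rpower_Ropp.
      apply Rinv_le_contravar; [apply Rpower_pos|].
      apply Rle_Rpower_l; lra. }
    apply Rmult_le_compat_r with (r := t) in Hdecr; [|lra].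
    replace (Rpower t al / t * t) with (Rpower t al) in Hdecr by (field; lra).
    lra.
Qed.

Lemma GammaPos_shift_le x al : 0 < x -> 0 <= al <= 1 ->
  GammaPos (x + al) <= 2 * Rpower x al * GammaPos x.
Proof.
  intros Hx Hal. apply GammaPos_le; [lra|]. intros a b Ha Hab.
  set (g := fun t => Rpower x al * gamma_integrand x t
                     + Rpower x (al - 1) * gamma_integrand (x + 1) t).
  assert (Hg : is_RInt g a b (Rpower x al * RInt (gamma_integrand x) a b
                              + Rpower x (al - 1) * RInt (gamma_integrand (x + 1)) a b)).
  { apply (is_RInt_plus (V:=R_NormedModule)); apply (is_RInt_scal (V:=R_NormedModule));
      apply (RInt_correct (V:=R_CompleteNormedModule)), ex_RInt_gamma_integrand; lra. }
  apply Rle_trans with (RInt g a b).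
  { apply RInt_le; [lra | now apply ex_RInt_gamma_integrand | eexists; exact Hg |].
    intros t Ht. unfold g, gamma_integrand.
    replace (x + al - 1) with (al + (x - 1)) by ring.
    replace (x + 1 - 1) with (1 + (x - 1)) by ring.
    rewrite !Rpower_plus, Rpower_1 by lra.
    pose proof (Rpower_le_affine x t al Hx ltac:(lra) Hal).
    assert (0 < exp (- t) * Rpower t (x - 1)) by apply gamma_integrand_pos.
    nra. }
  rewrite (is_RInt_unique _ _ _ _ Hg).
  pose proof (RInt_gamma_integrand_le_GammaPos x a b Hx Ha Hab).
  pose proof (RInt_gamma_integrand_le_GammaPos (x + 1) a b ltac:(lra) Ha Hab).
  pose proof (GammaPos_succ_le x Hx).
  assert (Hpow : Rpower x (al - 1) * x = Rpower x al) by (rewrite Rpower_minus_1 by lra; field; lra).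
  pose proof (Rpower_pos x al). pose proof (Rpower_pos x (al - 1)).
  nra.
Qed.

Lemma Gamma_eq_GammaPos y : 0 < y -> Gamma y = GammaPos y.
Proof. intros Hy. unfold Gamma; simpl. now destruct (Rlt_dec 0 y). Qed.

Lemma Gamma_ratio_le x al : 0 < x -> 0 <= al <= 1 ->
  Rabs (Gamma (x + al) / Gamma x) <= 2 * Rpower x al.
Proof.
  intros Hx Hal. rewrite !Gamma_eq_GammaPos by lra.
  pose proof (GammaPos_shift_le x al Hx Hal).
  pose proof (GammaPos_ge0 (x + al) ltac:(lra)). pose proof (Rpower_pos x al).
  destruct (GammaPos_ge0 x Hx) as [Hpos | <-].
  - rewrite Rabs_right by (apply Rle_ge, Rdiv_le_0_compat; lra).
    apply Rmult_le_reg_r with (GammaPos x); [exact Hpos|].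
    unfold Rdiv. rewrite Rmult_assoc, Rinv_l by lra. lra.
  - unfold Rdiv. rewrite Rinv_0, Rmult_0_r, Rabs_R0. lra.
Qed.

Lemma Gamma_recurrence_ratio_le alpha k : 0 < alpha < 1 / 2 -> (2 <= k)%nat ->
  Rabs (Gamma (INR k * alpha + INR k / 2 - 1) / Gamma (INR (k - 1) * alpha + INR k / 2 - 1))
  <= 2 * Rpower (INR k) (alpha + 1 / 2).
Proof.
  intros Halpha Hk.
  assert (HK : 2 <= INR k) by (apply (le_INR 2); lia).
  assert (Hm : INR (k - 1) = INR k - 1) by (rewrite minus_INR by lia; reflexivity).
  set (x := INR (k - 1) * alpha + INR k / 2 - 1).
  assert (Hx : 0 < x <= INR k) by (unfold x; rewrite Hm; split; nra).
  replace (INR k * alpha + INR k / 2 - 1) with (x + alpha) by (unfold x; rewrite Hm; ring).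
  eapply Rle_trans; [apply Gamma_ratio_le; lra|].
  apply Rmult_le_compat_l; [lra|].
  apply Rle_trans with (Rpower (INR k) alpha); [apply Rle_Rpower_l; lra|].
  apply Rle_Rpower; lra.
Qed.

Lemma sum_n_m_le_loc (a b : nat -> R) n m :
  (forall k, (n <= k <= m)%nat -> a k <= b k) -> sum_n_m a n m <= sum_n_m b n m.
Proof.
  intros Hab. destruct (Nat.le_gt_cases n m) as [Hnm | Hmn].
  - induction Hnm as [|m Hnm IH].
    + rewrite !sum_n_n. apply Hab. lia.
    + rewrite !sum_n_Sm by lia. apply Rplus_le_compat.
      * apply IH. intros k Hk. apply Hab. lia.
      * apply Hab. lia.
  - rewrite !sum_n_m_zero by lia. apply Rle_refl.
Qed.

Lemma sum_n_m_telescope (F : nat -> R) n m : (n <= m)%nat ->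
  sum_n_m (fun j => F j - F (S j)) n m = F n - F (S m).
Proof.
  induction 1 as [|m Hnm IH].
  - now rewrite sum_n_n.
  - rewrite sum_n_Sm by lia. rewrite IH. unfold plus; simpl. ring.
Qed.

Lemma inv_sq_le_telescope p : 1 <= p -> (/ p) ^ 2 <= 2 * (/ p - / (p + 1)).
Proof.
  intros Hp.
  assert (0 <= (p - 1) / (p ^ 2 * (p + 1))) by (apply Rdiv_le_0_compat; nra).
  replace (2 * (/ p - / (p + 1))) with ((/ p) ^ 2 + (p - 1) / (p ^ 2 * (p + 1))) by (field; lra).
  lra.
Qed.

(* Since [/ (p * q) = (/ p + / q) / (p + q)]. *)
Lemma inv_sq_mul_le p q : 1 <= p -> 1 <= q ->
  / (p ^ 2 * q ^ 2) <= 4 / (p + q) ^ 2 * ((/ p - / (p + 1)) + (/ q - / (q + 1))).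
Proof.
  intros Hp Hq.
  replace (/ (p ^ 2 * q ^ 2)) with (/ (p + q) ^ 2 * (/ p + / q) ^ 2) by (field; lra).
  assert ((/ p + / q) ^ 2 <= 2 * (/ p) ^ 2 + 2 * (/ q) ^ 2) by (pose proof (pow2_ge_0 (/ p - / q)); nra).
  pose proof (inv_sq_le_telescope p Hp). pose proof (inv_sq_le_telescope q Hq).
  assert (0 < / (p + q) ^ 2) by (apply Rinv_0_lt_compat; nra).
  unfold Rdiv. rewrite (Rmult_comm 4), Rmult_assoc.
  apply Rmult_le_compat_l; lra.
Qed.

Lemma sum_inv_sq_convolution_le k : (2 <= k)%nat ->
  sum_n_m (fun j => / (INR j ^ 2 * INR (k - j) ^ 2)) 1 (k - 1) <= 8 / INR k ^ 2.
Proof.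
  intros Hk.
  assert (HK : 2 <= INR k) by (apply (le_INR 2); lia).
  set (F1 := fun j : nat => / INR j).
  set (F2 := fun j : nat => - / (INR k - INR j + 1)).
  apply Rle_trans with
    (sum_n_m (fun j => 4 / INR k ^ 2 * ((F1 j - F1 (S j)) + (F2 j - F2 (S j)))) 1 (k - 1)).
  - apply sum_n_m_le_loc. intros j Hj.
    assert (Hj1 : 1 <= INR j) by (apply (le_INR 1); lia).
    assert (Hkj : INR (k - j) = INR k - INR j) by (apply minus_INR; lia).
    assert (Hkj1 : 1 <= INR k - INR j) by (rewrite <- Hkj; apply (le_INR 1); lia).
    pose proof (inv_sq_mul_le (INR j) (INR k - INR j) Hj1 Hkj1) as Hterm.
    replace (INR j + (INR k - INR j)) with (INR k) in Hterm by ring.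
    rewrite Hkj. unfold F1, F2. rewrite S_INR.
    replace (INR k - (INR j + 1) + 1) with (INR k - INR j) by ring.
    eapply Rle_trans; [exact Hterm | right; ring].
  - replace (8 / INR k ^ 2) with (4 / INR k ^ 2 * 2) by (field; lra).
    assert (0 < 4 / INR k ^ 2) by (apply Rdiv_lt_0_compat; nra).
    set (q := 4 / INR k ^ 2) in *.
    rewrite (sum_n_m_mult_l (K:=R_Ring)), (sum_n_m_plus (G:=R_AbelianMonoid)).
    rewrite !sum_n_m_telescope by lia. unfold mult, plus; simpl.
    replace (S (k - 1)) with k by lia. unfold F1, F2. change (INR 1) with 1.
    replace (INR k - INR k + 1) with 1 by ring. replace (INR k - 1 + 1) with (INR k) by ring.
    assert (0 < / INR k) by (apply Rinv_0_lt_compat; lra).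
    rewrite Rinv_1. apply Rmult_le_compat_l; lra.
Qed.

Lemma Rpower_self_mul_le p q s : 0 < p -> 0 < q -> 0 <= s ->
  Rpower p (s * p) * Rpower q (s * q) <= Rpower (p + q) (s * (p + q)).
Proof.
  intros Hp Hq Hs.
  rewrite Rmult_plus_distr_l, Rpower_plus.
  apply Rmult_le_compat; try (left; apply Rpower_pos); apply Rle_Rpower_l; nra.
Qed.

Definition growth_weight (s : R) (k : nat) : R := Rpower (INR k) (s * INR k) / INR k ^ 2.

Lemma growth_weight_1 s : growth_weight s 1 = 1.
Proof. unfold growth_weight. simpl. rewrite Rpower_1_l. field. Qed.

Lemma growth_weight_le s k : (1 <= k)%nat -> growth_weight s k <= Rpower (INR k) (s * INR k).
Proof.
  intros Hk. assert (HK : 1 <= INR k) by (apply (le_INR 1); lia).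
  unfold growth_weight, Rdiv. pose proof (Rpower_pos (INR k) (s * INR k)).
  assert (0 < / INR k ^ 2 <= 1).
  { split; [apply Rinv_0_lt_compat; nra|]. rewrite <- Rinv_1. apply Rinv_le_contravar; nra. }
  nra.
Qed.

Lemma growth_weight_convolution s k : 0 <= s -> (2 <= k)%nat ->
  sum_n_m (fun j => growth_weight s j * growth_weight s (k - j)) 1 (k - 1)
  <= 8 * growth_weight s k.
Proof.
  intros Hs Hk.
  apply Rle_trans with (sum_n_m (fun j => Rpower (INR k) (s * INR k)
                                          * / (INR j ^ 2 * INR (k - j) ^ 2)) 1 (k - 1)).
  - apply sum_n_m_le_loc. intros j Hj.
    assert (Hj1 : 1 <= INR j) by (apply (le_INR 1); lia).
    assert (Hkj1 : 1 <= INR (k - j)) by (apply (le_INR 1); lia).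
    assert (Hsplit : INR k = INR j + INR (k - j)) by (rewrite <- plus_INR; f_equal; lia).
    pose proof (Rpower_self_mul_le (INR j) (INR (k - j)) s ltac:(lra) ltac:(lra) Hs) as Hpow.
    rewrite <- Hsplit in Hpow.
    unfold growth_weight.
    replace (Rpower (INR j) (s * INR j) / INR j ^ 2 * (Rpower (INR (k - j)) (s * INR (k - j)) / INR (k - j) ^ 2))
      with (Rpower (INR j) (s * INR j) * Rpower (INR (k - j)) (s * INR (k - j))
            * / (INR j ^ 2 * INR (k - j) ^ 2)) by (field; lra).
    apply Rmult_le_compat_r; [|exact Hpow].
    left. apply Rinv_0_lt_compat, Rmult_lt_0_compat; apply pow_lt; lra.
  - rewrite (sum_n_m_mult_l (K:=R_Ring)). unfold growth_weight.
    replace (8 * (Rpower (INR k) (s * INR k) / INR k ^ 2))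
      with (Rpower (INR k) (s * INR k) * (8 / INR k ^ 2)) by (unfold Rdiv; ring).
    apply Rmult_le_compat_l; [left; apply Rpower_pos|].
    now apply sum_inv_sq_convolution_le.
Qed.

Lemma growth_weight_pred_le s k : 0 <= s -> (2 <= k)%nat ->
  growth_weight s (k - 1) * Rpower (INR k) s <= 4 * growth_weight s k.
Proof.
  intros Hs Hk.
  assert (HK : 2 <= INR k) by (apply (le_INR 2); lia).
  assert (Hm : INR (k - 1) = INR k - 1) by (rewrite minus_INR by lia; reflexivity).
  unfold growth_weight. rewrite Hm.
  apply Rle_trans with (Rpower (INR k) (s * (INR k - 1)) * Rpower (INR k) s / (INR k - 1) ^ 2).
  - replace (Rpower (INR k - 1) (s * (INR k - 1)) / (INR k - 1) ^ 2 * Rpower (INR k) s)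
      with (Rpower (INR k - 1) (s * (INR k - 1)) * Rpower (INR k) s / (INR k - 1) ^ 2)
      by (field; lra).
    unfold Rdiv. apply Rmult_le_compat_r; [left; apply Rinv_0_lt_compat; nra|].
    apply Rmult_le_compat_r; [left; apply Rpower_pos|].
    apply Rle_Rpower_l; nra.
  - rewrite <- Rpower_plus. replace (s * (INR k - 1) + s) with (s * INR k) by ring.
    unfold Rdiv. rewrite (Rmult_comm 4), Rmult_assoc.
    apply Rmult_le_compat_l; [left; apply Rpower_pos|].
    replace (/ INR k ^ 2 * 4) with (/ (INR k / 2) ^ 2) by (field; lra).
    apply Rinv_le_contravar; nra.
Qed.

Lemma recurrence_div_fact (C : nat -> R) (r : R) k : (2 <= k)%nat ->
  C k = 1 / 4 * sum_n_m (fun j => Binomial.C k j * C j * C (k - j)%nat) 1 (k - 1)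
        + INR k * C (k - 1)%nat * r ->
  C k / INR (Factorial.fact k) =
  / 4 * sum_n_m (fun j => C j / INR (Factorial.fact j) * (C (k - j)%nat / INR (Factorial.fact (k - j)))) 1 (k - 1)
  + C (k - 1)%nat / INR (Factorial.fact (k - 1)) * r.
Proof.
  intros Hk ->.
  assert (Hbinom : sum_n_m (fun j => Binomial.C k j * C j * C (k - j)%nat) 1 (k - 1)
    = sum_n_m (fun j => C j / INR (Factorial.fact j) * (C (k - j)%nat / INR (Factorial.fact (k - j)))) 1 (k - 1)
      * INR (Factorial.fact k)).
  { rewrite <- (sum_n_m_mult_r (K:=R_Ring)). apply sum_n_m_ext_loc. intros j _.
    unfold mult, Binomial.C; simpl. field. split; apply INR_fact_neq_0. }
  assert (Hfact : INR (Factorial.fact k) = INR k * INR (Factorial.fact (k - 1))).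
  { destruct k as [|k]; [lia|].
    now rewrite fact_simpl, mult_INR, Nat.sub_succ, Nat.sub_0_r. }
  rewrite Hbinom, Hfact. field.
  split; [apply INR_fact_neq_0 | apply not_0_INR; lia].
Qed.

Section RecurrenceGrowth.

Variables (c g : nat -> R) (s A : R).
Hypothesis s_ge0 : 0 <= s.
Hypothesis A_ge16 : 16 <= A.
Hypothesis c1_le : 4 * Rabs (c 1%nat) <= A.
Hypothesis g_le : forall k, (2 <= k)%nat -> Rabs (g k) <= 2 * Rpower (INR k) s.
Hypothesis c_rec : forall k, (2 <= k)%nat ->
  c k = / 4 * sum_n_m (fun j => c j * c (k - j)%nat) 1 (k - 1) + c (k - 1)%nat * g k.

Lemma recurrence_bound_step k : (2 <= k)%nat ->
  (forall j, (1 <= j < k)%nat -> Rabs (c j) <= / 4 * A ^ j * growth_weight s j) ->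
  Rabs (c k) <= / 4 * A ^ k * growth_weight s k.
Proof.
  intros Hk IH.
  assert (HAk : A ^ k = A * A ^ (k - 1)) by (replace k with (S (k - 1)) at 1 by lia; reflexivity).
  assert (HA0 : 0 < A ^ (k - 1)) by (apply pow_lt; lra).
  assert (Hw : 0 <= growth_weight s k).
  { unfold growth_weight. apply Rdiv_le_0_compat; [left; apply Rpower_pos | apply pow_lt, lt_0_INR; lia]. }
  assert (Hquad : Rabs (sum_n_m (fun j => c j * c (k - j)%nat) 1 (k - 1))
                  <= / 2 * A ^ k * growth_weight s k).
  { eapply Rle_trans; [apply (norm_sum_n_m (K:=R_AbsRing) (V:=R_NormedModule))|].
    apply Rle_trans with (sum_n_m (fun j => / 16 * A ^ k
                           * (growth_weight s j * growth_weight s (k - j))) 1 (k - 1)).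
    - apply sum_n_m_le_loc. intros j Hj.
      change (norm (c j * c (k - j)%nat)) with (Rabs (c j * c (k - j)%nat)).
      rewrite Rabs_mult.
      replace (A ^ k) with (A ^ j * A ^ (k - j)) by (rewrite <- pow_add; f_equal; lia).
      pose proof (IH j ltac:(lia)). pose proof (IH (k - j)%nat ltac:(lia)).
      eapply Rle_trans;
        [apply Rmult_le_compat; [apply Rabs_pos | apply Rabs_pos | eassumption | eassumption]|].
      right. field.
    - rewrite (sum_n_m_mult_l (K:=R_Ring)).
      pose proof (growth_weight_convolution s k s_ge0 Hk).
      assert (0 <= / 16 * A ^ k) by (rewrite HAk; nra).
      set (S := sum_n_m _ 1 (k - 1)) in *. change (mult (/ 16 * A ^ k) S) with (/ 16 * A ^ k * S).
      nra. }
  assert (Hlin : Rabs (c (k - 1)%nat * g k) <= 2 * A ^ (k - 1) * growth_weight s k).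
  { rewrite Rabs_mult.
    pose proof (IH (k - 1)%nat ltac:(lia)). pose proof (g_le k Hk).
    pose proof (growth_weight_pred_le s k s_ge0 Hk).
    eapply Rle_trans;
      [apply Rmult_le_compat; [apply Rabs_pos | apply Rabs_pos | eassumption | eassumption]|].
    replace (/ 4 * A ^ (k - 1) * growth_weight s (k - 1) * (2 * Rpower (INR k) s))
      with (/ 2 * A ^ (k - 1) * (growth_weight s (k - 1) * Rpower (INR k) s)) by field.
    nra. }
  rewrite (c_rec k Hk).
  eapply Rle_trans; [apply Rabs_triang|].
  rewrite Rabs_mult, (Rabs_right (/ 4)) by lra.
  rewrite HAk in *.
  assert (0 <= (A - 16) * (A ^ (k - 1) * growth_weight s k))
    by (apply Rmult_le_pos; [lra | apply Rmult_le_pos; lra]).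
  nra.
Qed.

Lemma recurrence_bound k : (1 <= k)%nat -> Rabs (c k) <= / 4 * A ^ k * growth_weight s k.
Proof.
  induction k as [k IH] using Wf_nat.lt_wf_ind. intros Hk.
  destruct (Nat.eq_dec k 1) as [-> | Hk1].
  - rewrite growth_weight_1. simpl. lra.
  - apply recurrence_bound_step; [lia|]. intros j Hj. apply IH; lia.
Qed.

End RecurrenceGrowth.

Theorem lemma3p4 (alpha : R) (Hpos : 0 < alpha) (Hlt : alpha < 1 / 2)
  (C : nat -> R)
  (HC1 : C 1%nat = Gamma (alpha - 1 / 2) / sqrt PI)
  (HCk : forall k : nat, (2 <= k)%nat ->
     C k = 1 / 4 * sum_n_m (fun j => Binomial.C k j * C j * C (k - j)%nat) 1 (k - 1)
           + INR k * C (k - 1)%nat *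
             (Gamma (INR k * alpha + INR k / 2 - 1)
              / Gamma (INR (k - 1) * alpha + INR k / 2 - 1))) :
  exists A : R, forall k : nat, (1 <= k)%nat ->
    Rabs (C k / INR (Factorial.fact k)) <= A ^ k * Rpower (INR k) ((alpha + 1 / 2) * INR k).
Proof.
  set (s := alpha + 1 / 2).
  set (c := fun k => C k / INR (Factorial.fact k)).
  set (g := fun k => Gamma (INR k * alpha + INR k / 2 - 1)
                     / Gamma (INR (k - 1) * alpha + INR k / 2 - 1)).
  assert (Hg : forall k, (2 <= k)%nat -> Rabs (g k) <= 2 * Rpower (INR k) s)
    by (intros k Hk; now apply Gamma_recurrence_ratio_le).
  assert (Hrec : forall k, (2 <= k)%nat ->
    c k = / 4 * sum_n_m (fun j => c j * c (k - j)%nat) 1 (k - 1) + c (k - 1)%nat * g k)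
    by (intros k Hk; now apply recurrence_div_fact, HCk).
  set (A := 16 + 4 * Rabs (c 1%nat)).
  assert (HA : 16 <= A) by (pose proof (Rabs_pos (c 1%nat)); unfold A; lra).
  exists A. intros k Hk.
  change (Rabs (c k) <= A ^ k * Rpower (INR k) (s * INR k)).
  eapply Rle_trans.
  { apply (recurrence_bound c g s A);
      [unfold s; lra | exact HA | unfold A; lra | exact Hg | exact Hrec | exact Hk]. }
  pose proof (growth_weight_le s k Hk). pose proof (Rpower_pos (INR k) (s * INR k)).
  assert (0 < A ^ k) by (apply pow_lt; lra).
  nra.
Qed.
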